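(* Let $u=p_1(t)e^{-|x-q_1(t)|}+p_2(t)e^{-|x-q_2(t)|}$ be a 2-peakon solution of the Camassa-Holm equation, i.e. $(q,p)$ solves $\dot q_i=\partial H/\partial p_i$, $\dot p_i=-\partial H/\partial q_i$, $H=\frac12\sum_{i,j=1}^2p_ip_je^{-|q_i-q_j|}$, with $q_1(0)>q_2(0)$ and energy $H_1:=p_1^2+p_2^2+2p_1p_2e^{-|q_1-q_2|}=c>0$. Then the two peakons collide (i.e. $q_1(t)-q_2(t)\to0$ at some finite time) if and only if the momentum $H_0=p_1+p_2$ satisfies $|H_0|<\sqrt c$ and $p_1-p_2<0$ at $t=0$. Equivalently, if and only if $p_1<0$ and $p_2>0$ at $t=0$. *)

From Stdlib Require Import Reals.
From Coquelicot Require Import Coquelicot.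
Open Scope R_scope.

Definition sgn (x : R) : R := if Rlt_dec 0 x then 1 else if Rlt_dec x 0 then -1 else 0.

Definition H2 (q1 q2 p1 p2 : R) : R :=
  / 2 * (p1 * p1 + p2 * p2 + 2 * p1 * p2 * exp (- Rabs (q1 - q2))).

(* Its partial derivatives (written out; valid for q1 <> q2) *)
Definition dH_dp1 (q1 q2 p1 p2 : R) : R := p1 + p2 * exp (- Rabs (q1 - q2)).
Definition dH_dp2 (q1 q2 p1 p2 : R) : R := p2 + p1 * exp (- Rabs (q1 - q2)).
Definition dH_dq1 (q1 q2 p1 p2 : R) : R :=
  - (p1 * p2 * sgn (q1 - q2) * exp (- Rabs (q1 - q2))).
Definition dH_dq2 (q1 q2 p1 p2 : R) : R :=
  p1 * p2 * sgn (q1 - q2) * exp (- Rabs (q1 - q2)).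

Definition peakon_solution_on (T : R) (q1 q2 p1 p2 : R -> R) : Prop :=
  forall t, 0 <= t < T ->
    is_derive q1 t (dH_dp1 (q1 t) (q2 t) (p1 t) (p2 t)) /\
    is_derive q2 t (dH_dp2 (q1 t) (q2 t) (p1 t) (p2 t)) /\
    is_derive p1 t (- dH_dq1 (q1 t) (q2 t) (p1 t) (p2 t)) /\
    is_derive p2 t (- dH_dq2 (q1 t) (q2 t) (p1 t) (p2 t)).

Definition collide (a1 a2 b1 b2 : R) : Prop :=
  exists (T : R) (q1 q2 p1 p2 : R -> R),
    0 < T /\
    q1 0 = a1 /\ q2 0 = a2 /\ p1 0 = b1 /\ p2 0 = b2 /\
    peakon_solution_on T q1 q2 p1 p2 /\
    (forall t, 0 <= t < T -> q2 t < q1 t) /\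
    filterlim (fun t => q1 t - q2 t) (at_left T) (locally 0).

(* Along a solution with q1 > q2 put d = q1 - q2 and E = exp (- d).  Hamilton's equations read
   q1' = p1 + p2 E, q2' = p2 + p1 E, p1' = - p2' = p1 p2 E, so the momentum p1 + p2 and
   K = p1 p2 (1 - E) are conserved, while d' = (p1 - p2) (1 - E) and 1 - E <= d.
   Unless p1(0) < 0 < p2(0), d stays away from 0: if K > 0, then 4 K <= (p1 + p2)^2 (1 - E);
   if K < 0 and p1(0) > 0, then p1 never vanishes, so p2 < 0 and d is nondecreasing;
   if K = 0, the momenta are constant and d' >= - |p1 - p2| d, so Gronwall applies.
   Conversely, if p1(0) < 0 < p2(0) then K < 0, and with u > 0 > v the roots of
   x^2 - (p1 + p2) x + K the solution is explicit in X = C exp (- (u - v) t); the peakons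
   collide when X decreases to 1.  Finally (p1 + p2)^2 - c = 2 p1 p2 (1 - E) at t = 0 turns
   the condition on the momentum and energy into p1(0) < 0 < p2(0). *)

From Stdlib Require Import Reals.
From Coquelicot Require Import Coquelicot.
Open Scope R_scope.
From Stdlib Require Import Lra Ranalysis5.

Lemma is_derive_continuity_pt (f : R -> R) t l : is_derive f t l -> continuity_pt f t.
Proof.
  intro Hf; apply continuity_pt_filterlim, (ex_derive_continuous (V := R_NormedModule)).
  now exists l.
Qed.

Lemma nondecreasing_of_derive_nonneg (f df : R -> R) a b :
  (forall t, a <= t < b -> is_derive f t (df t)) ->
  (forall t, a <= t < b -> 0 <= df t) ->
  forall t, a <= t < b -> f a <= f t.
Proof.
  intros Hd Hpos t Ht.
  destruct (Req_dec t a) as [->|Hta]; [lra|].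
  destruct (MVT_gen f a t df) as [s [Hs Hmvt]];
    rewrite ?Rmin_left, ?Rmax_right in * by lra.
  - intros x Hx; apply Hd; lra.
  - intros x Hx; apply (is_derive_continuity_pt _ _ (df x)), Hd; lra.
  - assert (0 <= df s) by (apply Hpos; lra). nra.
Qed.

Lemma constant_of_derive_zero (f : R -> R) a b :
  (forall t, a <= t < b -> is_derive f t 0) ->
  forall t, a <= t < b -> f t = f a.
Proof.
  intros Hd t Ht.
  assert (f a <= f t).
  { exact (nondecreasing_of_derive_nonneg f (fun _ => 0) a b Hd (fun _ _ => Rle_refl 0) t Ht). }
  assert (- f a <= - f t).
  { apply (nondecreasing_of_derive_nonneg (fun s => - f s) (fun _ => 0) a b);
      [|intros; lra|exact Ht].
    intros s Hs; rewrite <- Ropp_0; exact (is_derive_opp f s 0 (Hd s Hs)). }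
  lra.
Qed.

Lemma continuous_nonvanishing_pos (f : R -> R) a b :
  (forall t, a <= t < b -> continuity_pt f t) ->
  (forall t, a <= t < b -> f t <> 0) ->
  0 < f a -> forall t, a <= t < b -> 0 < f t.
Proof.
  intros Hc Hnz Ha t Ht.
  destruct (Rlt_or_le 0 (f t)) as [|Hle]; [assumption|exfalso].
  assert (Hat : a < t) by (destruct (Req_dec t a) as [->|]; lra).
  destruct (IVT_interv (fun s => - f s) a t) as [z [Hz Hfz]].
  - intros s Hs; apply continuity_pt_opp, Hc; lra.
  - exact Hat.
  - lra.
  - assert (f t <> 0) by (apply Hnz; lra). simpl; lra.
  - apply (Hnz z); lra.
Qed.

Lemma exp_le_exp x y : x <= y -> exp x <= exp y.
Proof.
  intros [Hlt| ->]; [now apply Rlt_le, exp_increasing|apply Rle_refl].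
Qed.

Lemma gronwall_lower_bound (d dd : R -> R) M T :
  0 <= M -> 0 <= d 0 ->
  (forall t, 0 <= t < T -> is_derive d t (dd t)) ->
  (forall t, 0 <= t < T -> - (M * d t) <= dd t) ->
  forall t, 0 <= t < T -> d 0 * exp (- (M * T)) <= d t.
Proof.
  intros HM Hd0 Hd Hdd t Ht.
  assert (Hmono : d 0 <= d t * exp (M * t)).
  { replace (d 0) with (d 0 * exp (M * 0)) by (rewrite Rmult_0_r, exp_0; ring).
    apply (nondecreasing_of_derive_nonneg (fun s => d s * exp (M * s))
             (fun s => (dd s + M * d s) * exp (M * s)) 0 T); [|intros s Hs|exact Ht].
    - intros s Hs.
      assert (H := is_derive_mult d (fun s => exp (M * s)) s _ _ (Hd s Hs)
                     ltac:(auto_derive; [auto|reflexivity]) Rmult_comm).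
      replace ((dd s + M * d s) * exp (M * s))
        with (dd s * exp (M * s) + d s * (M * 1 * exp (M * s))) by ring.
      exact H.
    - apply Rmult_le_pos; [|apply Rlt_le, exp_pos]. assert (H := Hdd s Hs); lra. }
  assert (Hexp : exp (- (M * T)) <= exp (- (M * t))).
  { apply exp_le_exp, Ropp_le_contravar, Rmult_le_compat_l; lra. }
  assert (Hinv : exp (M * t) * exp (- (M * t)) = 1) by (rewrite <- exp_plus, Rplus_opp_r; apply exp_0).
  apply Rle_trans with (d 0 * exp (- (M * t))); [now apply Rmult_le_compat_l|].
  rewrite <- (Rmult_1_r (d t)), <- Hinv, <- Rmult_assoc.
  apply Rmult_le_compat_r; [apply Rlt_le, exp_pos|exact Hmono].
Qed.

Lemma not_filterlim_at_left_0_of_lower_bound (d : R -> R) a T m :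
  a < T -> 0 < m -> (forall t, a <= t < T -> m <= d t) ->
  ~ filterlim d (at_left T) (locally 0).
Proof.
  intros HaT Hm Hlow Hlim.
  assert (Hsmall := proj1 (filterlim_locally d 0) Hlim (mkposreal m Hm)).
  assert (Hin : at_left T (fun t => a <= t < T)).
  { exists (mkposreal (T - a) ltac:(simpl; lra)); intros t Hball HtT.
    change (Rabs (t - T) < T - a) in Hball. apply Rabs_def2 in Hball. lra. }
  destruct (filter_ex _ (filter_and _ _ Hsmall Hin)) as [t [Hball Ht]].
  change (Rabs (d t - 0) < m) in Hball. apply Rabs_def2 in Hball.
  specialize (Hlow t Ht). lra.
Qed.

Lemma sgn_pos x : 0 < x -> sgn x = 1.
Proof. intro Hx; unfold sgn; destruct (Rlt_dec 0 x); lra. Qed.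

Section OrderedPeakons.
Variables (T : R) (q1 q2 p1 p2 : R -> R).
Hypothesis solution : peakon_solution_on T q1 q2 p1 p2.
Hypothesis ordered : forall t, 0 <= t < T -> q2 t < q1 t.

Let d t := q1 t - q2 t.
Let E t := exp (- d t).

Lemma ordered_peakon_derivatives t : 0 <= t < T ->
  is_derive q1 t (p1 t + p2 t * E t) /\ is_derive q2 t (p2 t + p1 t * E t) /\
  is_derive p1 t (p1 t * p2 t * E t) /\ is_derive p2 t (- (p1 t * p2 t * E t)).
Proof.
  intro Ht; destruct (solution t Ht) as [Hq1 [Hq2 [Hp1 Hp2]]].
  unfold dH_dp1, dH_dp2, dH_dq1, dH_dq2 in *.
  assert (Hd : 0 < q1 t - q2 t) by (specialize (ordered t Ht); lra).
  rewrite Rabs_right, sgn_pos, Rmult_1_r in * by lra.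
  rewrite Ropp_involutive in Hp1.
  exact (conj Hq1 (conj Hq2 (conj Hp1 Hp2))).
Qed.

Lemma gap_exp_bounds t : 0 <= t < T -> 0 < 1 - E t <= d t.
Proof.
  intro Ht; unfold E, d; specialize (ordered t Ht).
  assert (exp (- (q1 t - q2 t)) < 1) by (rewrite <- exp_0; apply exp_increasing; lra).
  assert (Hineq := exp_ineq1_le (- (q1 t - q2 t))). lra.
Qed.

Lemma momentum_conserved t : 0 <= t < T -> p1 t + p2 t = p1 0 + p2 0.
Proof.
  apply (constant_of_derive_zero (fun t => p1 t + p2 t)).
  intros s Hs; destruct (ordered_peakon_derivatives s Hs) as [_ [_ [Hp1 Hp2]]].
  rewrite <- (Rplus_opp_r (p1 s * p2 s * E s)). exact (is_derive_plus p1 p2 s _ _ Hp1 Hp2).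
Qed.

Lemma collision_invariant_conserved t : 0 <= t < T ->
  p1 t * p2 t * (1 - E t) = p1 0 * p2 0 * (1 - E 0).
Proof.
  apply (constant_of_derive_zero (fun t => p1 t * p2 t * (1 - E t))).
  intros s Hs; destruct (ordered_peakon_derivatives s Hs) as [Hq1 [Hq2 [Hp1 Hp2]]].
  unfold E, d in *.
  auto_derive.
  - repeat split; eexists; eassumption.
  - rewrite (is_derive_unique (fun x : R => q1 x) _ _ Hq1),
      (is_derive_unique (fun x : R => q2 x) _ _ Hq2),
      (is_derive_unique (fun x : R => p1 x) _ _ Hp1),
      (is_derive_unique (fun x : R => p2 x) _ _ Hp2).
    change (q1 s + - q2 s) with (q1 s - q2 s).
    match goal with |- ?l = ?r => change (@eq R l r) end; ring.
Qed.

Lemma gap_derive t : 0 <= t < T -> is_derive d t ((p1 t - p2 t) * (1 - E t)).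
Proof.
  intro Ht; destruct (ordered_peakon_derivatives t Ht) as [Hq1 [Hq2 _]].
  replace ((p1 t - p2 t) * (1 - E t)) with (p1 t + p2 t * E t - (p2 t + p1 t * E t)) by ring.
  exact (is_derive_minus q1 q2 t _ _ Hq1 Hq2).
Qed.

Lemma collision_invariant_le_momentum_sq t : 0 <= t < T ->
  4 * (p1 0 * p2 0 * (1 - E 0)) <= (p1 0 + p2 0) ^ 2 * (1 - E t).
Proof.
  intro Ht.
  rewrite <- (collision_invariant_conserved t Ht), <- (momentum_conserved t Ht).
  destruct (gap_exp_bounds t Ht).
  assert (0 <= (p1 t - p2 t) ^ 2 * (1 - E t)) by (apply Rmult_le_pos; [apply pow2_ge_0|lra]).
  nra.
Qed.

Lemma gap_nondecreasing t : 0 < p1 0 -> p2 0 < 0 -> 0 <= t < T -> d 0 <= d t.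
Proof.
  intros Hp1 Hp2 Ht.
  assert (HK : p1 0 * p2 0 * (1 - E 0) < 0).
  { destruct (gap_exp_bounds 0 ltac:(lra)). assert (p1 0 * p2 0 < 0) by nra. nra. }
  assert (Hp1_pos : forall s, 0 <= s < T -> 0 < p1 s).
  { apply continuous_nonvanishing_pos; [|intros s Hs Hz|exact Hp1].
    - intros s Hs. apply (is_derive_continuity_pt _ _ _ (proj1 (proj2 (proj2
        (ordered_peakon_derivatives s Hs))))).
    - rewrite <- (collision_invariant_conserved s Hs), Hz in HK. lra. }
  apply (nondecreasing_of_derive_nonneg d (fun s => (p1 s - p2 s) * (1 - E s)) 0 T gap_derive);
    [intros s Hs|exact Ht].
  specialize (Hp1_pos s Hs).
  assert (HKs := collision_invariant_conserved s Hs).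
  destruct (gap_exp_bounds s Hs).
  assert (p2 s < 0).
  { destruct (Rlt_or_le (p2 s) 0) as [|Hp2s]; [assumption|].
    assert (0 <= p1 s * p2 s * (1 - E s)) by (apply Rmult_le_pos; [apply Rmult_le_pos|]; lra).
    lra. }
  apply Rmult_le_pos; lra.
Qed.

Lemma momenta_constant_of_product_zero t : p1 0 * p2 0 = 0 -> 0 <= t < T ->
  p1 t = p1 0 /\ p2 t = p2 0.
Proof.
  intros Hzero Ht.
  assert (Hprod : forall s, 0 <= s < T -> p1 s * p2 s = 0).
  { intros s Hs; destruct (gap_exp_bounds s Hs).
    assert (HK := collision_invariant_conserved s Hs). rewrite Hzero, Rmult_0_l in HK.
    destruct (Rmult_integral _ _ HK); [assumption|lra]. }
  split; apply (constant_of_derive_zero _ 0 T); try exact Ht; intros s Hs;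
    destruct (ordered_peakon_derivatives s Hs) as [_ [_ [Hp1 Hp2]]];
    rewrite Hprod, Rmult_0_l in * by exact Hs.
  - exact Hp1.
  - rewrite Ropp_0 in Hp2; exact Hp2.
Qed.

Lemma gap_lower_bound_of_product_zero t : p1 0 * p2 0 = 0 -> 0 <= t < T ->
  d 0 * exp (- (Rabs (p1 0 - p2 0) * T)) <= d t.
Proof.
  intros Hzero Ht.
  apply (gronwall_lower_bound d (fun s => (p1 s - p2 s) * (1 - E s)));
    [apply Rabs_pos| |exact gap_derive| |exact Ht].
  - destruct (gap_exp_bounds 0 ltac:(lra)); lra.
  - intros s Hs. destruct (momenta_constant_of_product_zero s Hzero Hs) as [-> ->].
    destruct (gap_exp_bounds s Hs).
    assert (Habs := Rabs_maj2 (p1 0 - p2 0)).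
    assert (0 <= (p1 0 - p2 0 + Rabs (p1 0 - p2 0)) * (1 - E s)) by (apply Rmult_le_pos; lra).
    assert (Rabs (p1 0 - p2 0) * (1 - E s) <= Rabs (p1 0 - p2 0) * d s)
      by (apply Rmult_le_compat_l; [apply Rabs_pos|lra]).
    nra.
Qed.

Lemma gap_lower_bound_of_product_pos t : 0 < p1 0 * p2 0 -> 0 <= t < T ->
  4 * (p1 0 * p2 0 * (1 - E 0)) / (p1 0 + p2 0) ^ 2 <= d t.
Proof.
  intros Hpos Ht.
  assert (HP : 0 < (p1 0 + p2 0) ^ 2) by nra.
  assert (Hle := collision_invariant_le_momentum_sq t Ht).
  destruct (gap_exp_bounds t Ht).
  apply Rle_trans with (1 - E t); [|assumption].
  apply Rmult_le_reg_r with ((p1 0 + p2 0) ^ 2); [exact HP|].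
  unfold Rdiv; rewrite Rmult_assoc, Rinv_l by lra. lra.
Qed.

Lemma gap_bounded_below : 0 < T -> ~ (p1 0 < 0 /\ 0 < p2 0) ->
  exists m, 0 < m /\ forall t, 0 <= t < T -> m <= d t.
Proof.
  intros HT Hsigns.
  destruct (gap_exp_bounds 0 ltac:(lra)) as [HE0 Hd0].
  destruct (total_order_T (p1 0 * p2 0) 0) as [[Hneg|Hzero]|Hpos].
  - exists (d 0); split; [lra|].
    assert (0 < p1 0 /\ p2 0 < 0) as [Hp1 Hp2].
    { destruct (Rlt_or_le (p1 0) 0) as [|[Hp1| Hp1]]; [exfalso; apply Hsigns; split; nra| |].
      - split; nra.
      - rewrite <- Hp1 in Hneg; lra. }
    intros t Ht; exact (gap_nondecreasing t Hp1 Hp2 Ht).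
  - exists (d 0 * exp (- (Rabs (p1 0 - p2 0) * T))); split.
    + apply Rmult_lt_0_compat; [lra|apply exp_pos].
    + intros t Ht; exact (gap_lower_bound_of_product_zero t Hzero Ht).
  - exists (4 * (p1 0 * p2 0 * (1 - E 0)) / (p1 0 + p2 0) ^ 2); split.
    + apply Rdiv_lt_0_compat; nra.
    + intros t Ht; exact (gap_lower_bound_of_product_pos t Hpos Ht).
Qed.
End OrderedPeakons.

Lemma collide_signs a1 a2 b1 b2 : collide a1 a2 b1 b2 -> b1 < 0 /\ 0 < b2.
Proof.
  intros [T [q1 [q2 [p1 [p2 [HT [<- [<- [<- [<- [Hsol [Hord Hlim]]]]]]]]]]]].
  destruct (Rlt_dec (p1 0) 0), (Rlt_dec 0 (p2 0)); try (split; assumption);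
    destruct (gap_bounded_below T q1 q2 p1 p2 Hsol Hord HT ltac:(tauto)) as [m [Hm Hlow]];
    case (not_filterlim_at_left_0_of_lower_bound _ 0 T m HT Hm Hlow Hlim).
Qed.

Lemma quadratic_roots_of_neg_product P K : K < 0 ->
  exists u v, 0 < u /\ v < 0 /\ u + v = P /\ u * v = K.
Proof.
  intro HK.
  set (s := sqrt (P ^ 2 - 4 * K)).
  assert (Hs2 : s * s = P ^ 2 - 4 * K) by (apply sqrt_sqrt; nra).
  assert (Hs : 0 <= s) by apply sqrt_pos.
  assert (Hprod : (P + s) / 2 * ((P - s) / 2) = K).
  { replace ((P + s) / 2 * ((P - s) / 2)) with ((P ^ 2 - s * s) / 4) by field.
    rewrite Hs2; field. }
  exists ((P + s) / 2), ((P - s) / 2).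
  repeat split; [nra|nra|field|exact Hprod].
Qed.

Section ExplicitCollision.
Variables (u v C a : R).
Hypotheses (u_pos : 0 < u) (v_neg : v < 0) (C_gt_1 : 1 < C).

(* Obtained by integrating d' = (p1 - p2) (1 - E) with p1 + p2 = u + v and p1 p2 (1 - E) = u v
   fixed; [Eg] plays the role of E. *)
Definition X t := C * exp (- ((u - v) * t)).
Definition P1 t := (u - v * X t) / (1 - X t).
Definition P2 t := (v - u * X t) / (1 - X t).
Definition Eg t := (u - v) ^ 2 * X t / ((u - v * X t) * (u * X t - v)).
Definition Q1 t := a + u * t + ln ((u - v * X t) / (u - v * C)).
Definition Q2 t := Q1 t + ln (Eg t).
Definition collision_time := ln C / (u - v).

Lemma X_pos t : 0 < X t.
Proof. apply Rmult_lt_0_compat; [lra|apply exp_pos]. Qed.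

Lemma X_factors_pos t : 0 < u - v * X t /\ 0 < u * X t - v.
Proof. assert (HX := X_pos t); split; nra. Qed.

Ltac explicit_field t := assert (X_pos := X_pos t); unfold P1, P2, Eg, Q1, Q2, X in *;
  match goal with |- ?l = ?r => change (@eq R l r) end; field; repeat split; nra.

Lemma P1_derive t : X t <> 1 -> is_derive P1 t (P1 t * P2 t * Eg t).
Proof. intro HX; unfold P1, P2, Eg, X in *; auto_derive; [lra|explicit_field t]. Qed.

Lemma P2_derive t : X t <> 1 -> is_derive P2 t (- (P1 t * P2 t * Eg t)).
Proof. intro HX; unfold P1, P2, Eg, X in *; auto_derive; [lra|explicit_field t]. Qed.

Lemma Q1_derive t : X t <> 1 -> is_derive Q1 t (P1 t + P2 t * Eg t).
Proof.
  intro HX; destruct (X_factors_pos t) as [Hl Hr]; assert (HC : 0 < u - v * C) by nra.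
  unfold Q1, P1, P2, Eg, X in *; auto_derive.
  - apply Rmult_lt_0_compat; [lra|now apply Rinv_0_lt_compat].
  - explicit_field t.
Qed.

Lemma Q2_derive t : X t <> 1 -> is_derive Q2 t (P2 t + P1 t * Eg t).
Proof.
  intro HX; destruct (X_factors_pos t) as [Hl Hr]; assert (HC : 0 < u - v * C) by nra.
  assert (HXp := X_pos t).
  unfold Q2, Q1, P1, P2, Eg, X in *; auto_derive.
  - split; [|split; [|split; [|exact I]]].
    + apply Rmult_lt_0_compat; [lra|now apply Rinv_0_lt_compat].
    + apply Rmult_integral_contrapositive_currified; lra.
    + apply Rmult_lt_0_compat; [apply Rmult_lt_0_compat; nra|].
      apply Rinv_0_lt_compat, Rmult_lt_0_compat; lra.
  - explicit_field t.
Qed.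

Lemma P1_add_P2 t : X t <> 1 -> P1 t + P2 t = u + v.
Proof. intro HX; unfold P1, P2; field; lra. Qed.

Lemma explicit_collision_invariant t : X t <> 1 -> P1 t * P2 t * (1 - Eg t) = u * v.
Proof. intro HX; explicit_field t. Qed.

Lemma Eg_pos t : 0 < Eg t.
Proof.
  destruct (X_factors_pos t); assert (HX := X_pos t).
  apply Rdiv_lt_0_compat; [apply Rmult_lt_0_compat|apply Rmult_lt_0_compat]; nra.
Qed.

Lemma Eg_lt_1 t : X t <> 1 -> Eg t < 1.
Proof.
  intro HX; destruct (X_factors_pos t).
  assert (H1E : 1 - Eg t = - (u * v) * (1 - X t) ^ 2 / ((u - v * X t) * (u * X t - v)))
    by explicit_field t.
  assert (0 < 1 - Eg t); [|lra].
  rewrite H1E; apply Rdiv_lt_0_compat; [|apply Rmult_lt_0_compat; lra].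
  apply Rmult_lt_0_compat; [nra|]. destruct (Rdichotomy _ _ HX); nra.
Qed.

Lemma collision_time_pos : 0 < collision_time.
Proof.
  apply Rdiv_lt_0_compat; [|lra].
  rewrite <- ln_1; apply ln_increasing; lra.
Qed.

Lemma X_collision_time : X collision_time = 1.
Proof.
  unfold X, collision_time.
  replace ((u - v) * (ln C / (u - v))) with (ln C) by (field; lra).
  rewrite exp_Ropp, exp_ln by lra. apply Rinv_r; lra.
Qed.

Lemma X_gt_1 t : t < collision_time -> 1 < X t.
Proof.
  intro Ht; rewrite <- X_collision_time; unfold X.
  apply Rmult_lt_compat_l; [lra|]. apply exp_increasing.
  apply Ropp_lt_contravar, Rmult_lt_compat_l; lra.
Qed.

Lemma Q1_0 : Q1 0 = a.
Proof.
  unfold Q1, X; rewrite !Rmult_0_r, Ropp_0, exp_0, Rmult_1_r, Rplus_0_r.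
  unfold Rdiv; rewrite Rinv_r, ln_1 by nra; ring.
Qed.

Lemma explicit_gap t : Q1 t - Q2 t = - ln (Eg t).
Proof. unfold Q2; ring. Qed.

Lemma explicit_gap_pos t : t < collision_time -> 0 < Q1 t - Q2 t.
Proof.
  intro Ht; rewrite explicit_gap.
  assert (ln (Eg t) < 0); [|lra].
  rewrite <- ln_1; apply ln_increasing; [apply Eg_pos|].
  apply Eg_lt_1; assert (1 < X t) by (now apply X_gt_1); lra.
Qed.

Lemma explicit_solution : peakon_solution_on collision_time Q1 Q2 P1 P2.
Proof.
  intros t [_ Ht].
  assert (HX : X t <> 1) by (assert (1 < X t) by (now apply X_gt_1); lra).
  assert (Hgap := explicit_gap_pos t Ht).
  assert (HE : exp (- Rabs (Q1 t - Q2 t)) = Eg t).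
  { rewrite Rabs_right, explicit_gap, Ropp_involutive by lra; apply exp_ln, Eg_pos. }
  unfold dH_dp1, dH_dp2, dH_dq1, dH_dq2.
  rewrite HE, sgn_pos, Rmult_1_r, Ropp_involutive by exact Hgap.
  exact (conj (Q1_derive t HX) (conj (Q2_derive t HX) (conj (P1_derive t HX) (P2_derive t HX)))).
Qed.

Lemma explicit_gap_tends_to_0 :
  filterlim (fun t => Q1 t - Q2 t) (at_left collision_time) (locally 0).
Proof.
  assert (HE : Eg collision_time = 1).
  { unfold Eg; rewrite X_collision_time. field; lra. }
  apply filterlim_ext with (f := fun t => - ln (Eg t)); [intro t; now rewrite explicit_gap|].
  apply (filterlim_filter_le_1 (F := locally collision_time)); [apply filter_le_within|].
  replace 0 with (- ln (Eg collision_time)) by (rewrite HE, ln_1; ring).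
  apply (ex_derive_continuous (V := R_NormedModule) (fun t => - ln (Eg t))).
  assert (HX := X_collision_time); destruct (X_factors_pos collision_time).
  unfold Eg, X in *; auto_derive; rewrite HX.
  split; [apply Rmult_integral_contrapositive_currified; lra|split; [|exact I]].
  apply Rmult_lt_0_compat; [nra|apply Rinv_0_lt_compat; nra].
Qed.

Lemma explicit_collides : collide a (Q2 0) (P1 0) (P2 0).
Proof.
  exists collision_time, Q1, Q2, P1, P2.
  split; [exact collision_time_pos|].
  split; [exact Q1_0|].
  do 3 (split; [reflexivity|]).
  split; [exact explicit_solution|].
  split; [|exact explicit_gap_tends_to_0].
  intros t [_ Ht]; assert (Hgap := explicit_gap_pos t Ht); lra.
Qed.
End ExplicitCollision.

Lemma collide_of_signs a1 a2 b1 b2 : a2 < a1 -> b1 < 0 -> 0 < b2 -> collide a1 a2 b1 b2.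
Proof.
  intros Ha Hb1 Hb2.
  set (E0 := exp (- (a1 - a2))).
  assert (HE0 : 0 < E0 < 1).
  { split; [apply exp_pos|]. rewrite <- exp_0; apply exp_increasing; lra. }
  assert (HK : b1 * b2 * (1 - E0) < 0) by (assert (b1 * b2 < 0) by nra; nra).
  destruct (quadratic_roots_of_neg_product (b1 + b2) _ HK) as [u [v [Hu [Hv [Hsum Hprod]]]]].
  assert (Hb1v : b1 < v).
  { assert (Houtside : (b1 - u) * (b1 - v) = - (b1 * b2 * E0)).
    { transitivity (b1 * b1 - b1 * (u + v) + u * v); [ring|].
      rewrite Hsum, Hprod; ring. }
    assert (0 < - (b1 * b2 * E0)) by (assert (b1 * b2 < 0) by nra; nra).
    nra. }
  set (C := (b1 - u) / (b1 - v)).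
  assert (HC : 1 < C).
  { unfold C; apply Rmult_lt_reg_r with (- (b1 - v)); [lra|].
    replace ((b1 - u) / (b1 - v) * - (b1 - v)) with (u - b1) by (field; lra). lra. }
  assert (HX0 : X u v C 0 = C) by (unfold X; rewrite Rmult_0_r, Ropp_0, exp_0; ring).
  assert (HX0' : X u v C 0 <> 1) by lra.
  assert (HP1 : P1 u v C 0 = b1).
  { unfold P1; rewrite HX0; unfold C; field; lra. }
  assert (HP2 : P2 u v C 0 = b2).
  { assert (Hadd := P1_add_P2 u v C 0 HX0'). lra. }
  assert (HEg : Eg u v C 0 = E0).
  { assert (H := explicit_collision_invariant u v C Hu Hv HC 0 HX0').
    rewrite HP1, HP2, Hprod in H.
    assert (b1 * b2 <> 0) by nra.
    apply Rmult_eq_reg_l with (b1 * b2); [lra|assumption]. }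
  assert (HQ2 : Q2 u v C a1 0 = a2).
  { unfold Q2; rewrite (Q1_0 u v C a1 Hu Hv HC), HEg; unfold E0; rewrite ln_exp; ring. }
  rewrite <- HQ2, <- HP1, <- HP2.
  exact (explicit_collides u v C a1 Hu Hv HC).
Qed.

Lemma Rabs_lt_sqrt_iff x c : 0 <= c -> Rabs x < sqrt c <-> x ^ 2 < c.
Proof.
  intro Hc; rewrite <- sqrt_Rsqr_abs, Rsqr_pow2.
  split; [apply sqrt_lt_0_alt|intro; apply sqrt_lt_1_alt; split; [apply pow2_ge_0|assumption]].
Qed.

Lemma momentum_energy_iff_opposite_signs a1 a2 b1 b2 c :
  a2 < a1 ->
  b1 ^ 2 + b2 ^ 2 + 2 * b1 * b2 * exp (- Rabs (a1 - a2)) = c -> 0 <= c ->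
  Rabs (b1 + b2) < sqrt c /\ b1 - b2 < 0 <-> b1 < 0 /\ 0 < b2.
Proof.
  intros Ha Hc Hc0.
  rewrite Rabs_right in Hc by lra.
  assert (HE0 : exp (- (a1 - a2)) < 1) by (rewrite <- exp_0; apply exp_increasing; lra).
  assert (Hsq : (b1 + b2) ^ 2 - c = 2 * (b1 * b2) * (1 - exp (- (a1 - a2)))) by (rewrite <- Hc; ring).
  rewrite (Rabs_lt_sqrt_iff _ _ Hc0).
  split; intros [H1 H2]; assert (b1 * b2 < 0) by nra; split; nra.
Qed.

Theorem theorem3 (a1 a2 b1 b2 c : R) :
  a2 < a1 ->
  b1 ^ 2 + b2 ^ 2 + 2 * b1 * b2 * exp (- Rabs (a1 - a2)) = c ->
  0 < c ->
  (collide a1 a2 b1 b2 <-> (Rabs (b1 + b2) < sqrt c /\ b1 - b2 < 0)) /\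
  (collide a1 a2 b1 b2 <-> (b1 < 0 /\ 0 < b2)).
Proof.
  intros Ha Hc Hc0.
  assert (Hsigns : collide a1 a2 b1 b2 <-> b1 < 0 /\ 0 < b2).
  { split; [apply collide_signs|intros [Hb1 Hb2]; exact (collide_of_signs _ _ _ _ Ha Hb1 Hb2)]. }
  rewrite (momentum_energy_iff_opposite_signs a1 a2 b1 b2 c Ha Hc (Rlt_le _ _ Hc0)).
  split; exact Hsigns.
Qed.
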